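(* Let $S$ be a functional PTS specification. If $\Gamma\models_S M:A$, $\Gamma\vdash_{\lambda S^*}M':A$ and $M\equiv_\beta M'$, then $\Gamma\models_S M':A$.
   Context: PTS: specification $S=(\mathcal S,\mathcal A,\mathcal R)$ (sorts, axioms $(s_1:s_2)$, rules $(s_1,s_2,s_3)$), functional meaning $\mathcal A,\mathcal R$ are functional relations; $\lambda S$ has terms $s\mid x\mid M\,N\mid\lambda x:A.M\mid\Pi x:A.B$ and the standard PTS typing rules (conversion modulo $\equiv_\beta$); $\mathrm{WF}_{\lambda S}(\Gamma)$ means $\Gamma$ is well formed. A top-sort is a sort $s$ with no $(s:s')\in\mathcal A$. The minimal completion $S^*$: sorts $\mathcal S\cup\{\tau\}$ ($\tau\notin\mathcal S$), axioms $\mathcal A\cup\{(s_1:\tau)\mid s_1$ a top-sort of $S\}$, rules $\mathcal R\cup\{(s_1,s_2,\tau)\mid s_1,s_2\in\mathcal S\cup\{\tau\}$, no $s_3$ with $(s_1,s_2,s_3)\in\mathcal R\}$. Reducibility predicate $\Gamma\models_S M:A$, defined by recursion: it holds iff $\mathrm{WF}_{\lambda S}(\Gamma)$, $\Gamma\vdash_{\lambda S^*}M:A$ and $\Gamma\vdash_{\lambda S^*}A:s$ for some sort $s$, and moreover: if $s\neq\tau$ or $A=s'$ for some $s'\in\mathcal S$, then there are $M',A'$ with $M\longrightarrow_\beta^*M'$, $A\longrightarrow_\beta^*A'$ and $\Gamma\vdash_{\lambda S}M':A'$; if $s=\tau$ and $A=\Pi x:B.C$, then for every $N$ with $\Gamma\models_S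 N:B$ we have $\Gamma\models_S M\,N:C[N/x]$. (These cases are exhaustive and the recursion is well founded.) *)

From Stdlib Require Import List Arith Relations.
Import ListNotations.

Set Implicit Arguments.

Inductive term (T : Type) : Type :=
  | Srt : T -> term T
  | Var : nat -> term T
  | App : term T -> term T -> term T
  | Lam : term T -> term T -> term T   (* Lam A M  =  \x:A. M *)
  | Pi  : term T -> term T -> term T.  (* Pi A B   =  Pi x:A. B *)

Arguments Srt {T} s.
Arguments Var {T} n.

Section Syntax.
Variable T : Type.

Fixpoint lift_rec (n k : nat) (t : term T) : term T :=
  match t with
  | Srt s => Srt s
  | Var i => if k <=? i then Var (i + n) else Var i
  | App u v => App (lift_rec n k u) (lift_rec n k v)
  | Lam A M => Lam (lift_rec n k A) (lift_rec n (S k) M)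
  | Pi A B => Pi (lift_rec n k A) (lift_rec n (S k) B)
  end.

Definition lift (n : nat) (t : term T) : term T := lift_rec n 0 t.

Fixpoint subst_rec (N t : term T) (k : nat) : term T :=
  match t with
  | Srt s => Srt s
  | Var i =>
      match Nat.compare i k with
      | Lt => Var i
      | Eq => lift k N
      | Gt => Var (pred i)
      end
  | App u v => App (subst_rec N u k) (subst_rec N v k)
  | Lam A M => Lam (subst_rec N A k) (subst_rec N M (S k))
  | Pi A B => Pi (subst_rec N A k) (subst_rec N B (S k))
  end.

(** [subst N t] is [t[N/x]] where [x] is variable 0. *)
Definition subst (N t : term T) : term T := subst_rec N t 0.

Inductive red1 : term T -> term T -> Prop :=
  | beta : forall A M N, red1 (App (Lam A M) N) (subst N M)
  | app_l : forall u u' v, red1 u u' -> red1 (App u v) (App u' v)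
  | app_r : forall u v v', red1 v v' -> red1 (App u v) (App u v')
  | lam_l : forall A A' M, red1 A A' -> red1 (Lam A M) (Lam A' M)
  | lam_r : forall A M M', red1 M M' -> red1 (Lam A M) (Lam A M')
  | pi_l : forall A A' B, red1 A A' -> red1 (Pi A B) (Pi A' B)
  | pi_r : forall A B B', red1 B B' -> red1 (Pi A B) (Pi A B').

Definition red : term T -> term T -> Prop := clos_refl_trans _ red1.

Definition conv : term T -> term T -> Prop := clos_refl_sym_trans _ red1.

(** Contexts are lists, the head being the most recent declaration
    (de Bruijn index 0). *)
Inductive typ (ax : T -> T -> Prop) (rl : T -> T -> T -> Prop)
  : list (term T) -> term T -> term T -> Prop :=
  | t_axiom : forall s1 s2, ax s1 s2 -> typ ax rl [] (Srt s1) (Srt s2)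
  | t_start : forall G A s,
      typ ax rl G A (Srt s) -> typ ax rl (A :: G) (Var 0) (lift 1 A)
  | t_weak : forall G M B C s,
      typ ax rl G M B -> typ ax rl G C (Srt s) ->
      typ ax rl (C :: G) (lift 1 M) (lift 1 B)
  | t_prod : forall G A B s1 s2 s3,
      typ ax rl G A (Srt s1) -> typ ax rl (A :: G) B (Srt s2) -> rl s1 s2 s3 ->
      typ ax rl G (Pi A B) (Srt s3)
  | t_app : forall G M N A B,
      typ ax rl G M (Pi A B) -> typ ax rl G N A ->
      typ ax rl G (App M N) (subst N B)
  | t_abs : forall G A M B s,
      typ ax rl (A :: G) M B -> typ ax rl G (Pi A B) (Srt s) ->
      typ ax rl G (Lam A M) (Pi A B)
  | t_conv : forall G M A B s,
      typ ax rl G M A -> typ ax rl G B (Srt s) -> conv A B ->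
      typ ax rl G M B.

Definition WF (ax : T -> T -> Prop) (rl : T -> T -> T -> Prop)
  (G : list (term T)) : Prop :=
  exists M A, typ ax rl G M A.

End Syntax.

Unset Implicit Arguments.

Record spec : Type := Spec {
  sorts : Type;
  axioms : sorts -> sorts -> Prop;
  rules : sorts -> sorts -> sorts -> Prop }.

Definition functional (S : spec) : Prop :=
  (forall s s1 s2, axioms S s s1 -> axioms S s s2 -> s1 = s2) /\
  (forall s1 s2 s3 s3', rules S s1 s2 s3 -> rules S s1 s2 s3' -> s3 = s3').

Definition top_sort (S : spec) (s : sorts S) : Prop :=
  ~ exists s', axioms S s s'.

(** The sorts of the minimal completion S^*: [option (sorts S)],
    [Some s] for [s] in S and [None] for the fresh sort tau. *)
Definition csort (S : spec) : Type := option (sorts S).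
Definition tau {S : spec} : csort S := None.

(** Terms of lambda S^* (terms of lambda S are those not mentioning tau). *)
Definition cterm (S : spec) : Type := term (csort S).

Definition axS (S : spec) (x y : csort S) : Prop :=
  match x, y with
  | Some a, Some b => axioms S a b
  | _, _ => False
  end.

Definition rlS (S : spec) (x y z : csort S) : Prop :=
  match x, y, z with
  | Some a, Some b, Some c => rules S a b c
  | _, _, _ => False
  end.

Definition axStar (S : spec) (x y : csort S) : Prop :=
  axS S x y \/ (y = tau /\ exists a, x = Some a /\ top_sort S a).

Definition rlStar (S : spec) (x y z : csort S) : Prop :=
  rlS S x y z \/ (z = tau /\ ~ exists c, rlS S x y (Some c)).

Definition typS (S : spec) := @typ (csort S) (axS S) (rlS S).
Definition typStar (S : spec) := @typ (csort S) (axStar S) (rlStar S).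
Definition WF_S (S : spec) := @WF (csort S) (axS S) (rlS S).

(** The defining (recursive) equation of the reducibility predicate
    [G |=_S M : A]. A predicate [P] satisfying it is the reducibility
    predicate (the recursion being well founded, it is unique). *)
Definition is_reducibility (S : spec)
  (P : list (cterm S) -> cterm S -> cterm S -> Prop) : Prop :=
  forall G M A,
    P G M A <->
    (WF_S S G /\ typStar S G M A /\
     exists s : csort S,
       typStar S G A (Srt s) /\
       ((s <> tau \/ exists s', A = Srt (Some s')) ->
          exists M' A', red M M' /\ red A A' /\ typS S G M' A') /\
       (s = tau -> forall B C, A = Pi B C ->
          forall N, P G N B -> P G (App M N) (subst N C))).

(** The first clause of [G |=_S M' : A], asking for a reduct of [M']
    typable in lambda S, follows from that of [M] by Church-Rosser and
    subject reduction in lambda S.  The second one, for [A = Pi x:B. C] of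
    type tau, follows from the induction hypothesis for [M N] and [M' N] at
    type [C[N/x]].  The induction is on the number of leading products of
    [A] whose codomains have type tau.  Substitution cannot increase it: a
    variable never has type tau, and by uniqueness of types in the
    functional specification S^* a substituted codomain of type tau comes
    from a codomain of type tau.  Hence it drops from [Pi x:B. C] to
    [C[N/x]]. *)

From Stdlib Require Import List Arith Relations Lia.
Import ListNotations.

Local Arguments Nat.leb : simpl never.

Ltac case_index :=
  repeat (match goal with
          | |- context [?a <=? ?b] => destruct (Nat.leb_spec a b)
          | |- context [Nat.compare ?a ?b] => destruct (Nat.compare_spec a b)
          end; simpl);
  try lia.

(** * Lifting and substitution *)

Section LiftSubst.
Context {T : Type}.
Implicit Types M N P : term T.

Lemma lift_rec0 M k : lift_rec 0 k M = M.
Proof.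
  revert k; induction M; intros; simpl; rewrite ?IHM1, ?IHM2; auto.
  case_index; f_equal; lia.
Qed.

Lemma simpl_lift_rec M n k p i :
  k <= i -> i <= k + n -> lift_rec p i (lift_rec n k M) = lift_rec (p + n) k M.
Proof.
  revert n k p i; induction M; intros; simpl; auto.
  - case_index; f_equal; lia.
  - rewrite IHM1, IHM2; auto.
  - rewrite IHM1, IHM2; auto; lia.
  - rewrite IHM1, IHM2; auto; lia.
Qed.

Lemma permute_lift_rec M n k p i :
  i <= k -> lift_rec p i (lift_rec n k M) = lift_rec n (p + k) (lift_rec p i M).
Proof.
  revert n k p i; induction M; intros; simpl; auto.
  - case_index; f_equal; lia.
  - rewrite IHM1, IHM2; auto.
  - rewrite IHM1, IHM2 by lia; repeat f_equal; lia.
  - rewrite IHM1, IHM2 by lia; repeat f_equal; lia.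
Qed.

Lemma simpl_subst_rec N M n p k :
  k <= p -> p <= n + k -> subst_rec N (lift_rec (S n) k M) p = lift_rec n k M.
Proof.
  revert n p k; induction M; intros; simpl; auto.
  - case_index; f_equal; lia.
  - rewrite IHM1, IHM2; auto.
  - rewrite IHM1, IHM2; auto; lia.
  - rewrite IHM1, IHM2; auto; lia.
Qed.

Lemma commute_lift_subst_rec N M n p k :
  k <= p -> lift_rec n k (subst_rec N M p) = subst_rec N (lift_rec n k M) (n + p).
Proof.
  revert n p k; induction M; intros; simpl; auto.
  - case_index; try (f_equal; lia).
    subst; unfold lift; rewrite simpl_lift_rec by lia; f_equal; lia.
  - rewrite IHM1, IHM2; auto.
  - rewrite IHM1, IHM2 by lia; repeat f_equal; lia.
  - rewrite IHM1, IHM2 by lia; repeat f_equal; lia.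
Qed.

Lemma distr_lift_subst_rec N M n p k :
  p <= k -> lift_rec n k (subst_rec N M p) =
            subst_rec (lift_rec n (k - p) N) (lift_rec n (S k) M) p.
Proof.
  revert n p k; induction M; intros; simpl; auto.
  - case_index; try (f_equal; lia).
    unfold lift; rewrite (permute_lift_rec N n0 (k - p) p 0) by lia.
    now replace (p + (k - p)) with k by lia.
  - rewrite IHM1, IHM2; auto.
  - rewrite IHM1, IHM2 by lia; repeat f_equal; lia.
  - rewrite IHM1, IHM2 by lia; repeat f_equal; lia.
Qed.

Lemma distr_subst_rec P N M k n :
  subst_rec P (subst_rec N M k) (k + n) =
  subst_rec (subst_rec P N n) (subst_rec P M (S (k + n))) k.
Proof.
  revert k; induction M; intros; simpl; auto.
  - case_index; try (f_equal; lia); subst; unfold lift.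
    + now rewrite commute_lift_subst_rec by lia.
    + now rewrite simpl_subst_rec by lia.
  - now rewrite IHM1, IHM2.
  - rewrite IHM1; f_equal; apply (IHM2 (S k)).
  - rewrite IHM1; f_equal; apply (IHM2 (S k)).
Qed.

Lemma lift_rec_subst N M n k :
  lift_rec n k (subst N M) = subst (lift_rec n k N) (lift_rec n (S k) M).
Proof.
  unfold subst; rewrite distr_lift_subst_rec by lia; now rewrite Nat.sub_0_r.
Qed.

Lemma subst_rec_subst P N M k :
  subst_rec P (subst N M) k = subst (subst_rec P N k) (subst_rec P M (S k)).
Proof. exact (distr_subst_rec P N M 0 k). Qed.

Lemma lift_rec_lift1 M n : lift_rec 1 (S n) (lift 1 M) = lift 1 (lift_rec 1 n M).
Proof. unfold lift; now rewrite (permute_lift_rec M 1 n 1 0) by lia. Qed.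

Lemma simpl_subst_lift1 N M : subst_rec N (lift 1 M) 0 = M.
Proof. unfold lift; rewrite simpl_subst_rec by lia; apply lift_rec0. Qed.

Lemma subst_rec_lift1 N M n :
  subst_rec N (lift 1 M) (S n) = lift 1 (subst_rec N M n).
Proof. unfold lift; now rewrite (commute_lift_subst_rec N M 1 n 0) by lia. Qed.

Lemma lift1_lift M n : lift 1 (lift n M) = lift (S n) M.
Proof. unfold lift; now rewrite simpl_lift_rec by lia. Qed.

Lemma lift_rec_eq_srt M n k s : lift_rec n k M = Srt s -> M = Srt s.
Proof. destruct M; simpl; try discriminate; auto; case_index; discriminate. Qed.

Lemma lift1_eq_var M i : lift 1 M = Var i -> exists j, M = Var j /\ i = S j.
Proof.
  destruct M; simpl; try discriminate.
  intros E; inversion E; exists n; split; auto; lia.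
Qed.

Lemma lift_rec_eq_app M n k A B : lift_rec n k M = App A B ->
  exists A0 B0, M = App A0 B0 /\ A = lift_rec n k A0 /\ B = lift_rec n k B0.
Proof.
  destruct M; simpl; intros E; try discriminate.
  - revert E; case_index; discriminate.
  - inversion E; eauto.
Qed.

Lemma lift_rec_eq_lam M n k A B : lift_rec n k M = Lam A B ->
  exists A0 B0, M = Lam A0 B0 /\ A = lift_rec n k A0 /\ B = lift_rec n (S k) B0.
Proof.
  destruct M; simpl; intros E; try discriminate.
  - revert E; case_index; discriminate.
  - inversion E; eauto.
Qed.

Lemma lift_rec_eq_pi M n k A B : lift_rec n k M = Pi A B ->
  exists A0 B0, M = Pi A0 B0 /\ A = lift_rec n k A0 /\ B = lift_rec n (S k) B0.
Proof.
  destruct M; simpl; intros E; try discriminate.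
  - revert E; case_index; discriminate.
  - inversion E; eauto.
Qed.

End LiftSubst.

(** * Beta-reduction and conversion *)

Set Implicit Arguments.

Section Reduction.
Context {T : Type}.
Implicit Types M N P A B X : term T.

Lemma red1_lift_rec M M' n k : red1 M M' -> red1 (lift_rec n k M) (lift_rec n k M').
Proof.
  intros H; revert n k; induction H; intros; simpl; try (constructor; auto).
  rewrite lift_rec_subst; constructor.
Qed.

Lemma red1_lift_rec_inv M n k X : red1 (lift_rec n k M) X ->
  exists M', red1 M M' /\ X = lift_rec n k M'.
Proof.
  revert n k X; induction M; intros n0 k X H; simpl in H.
  - inversion H.
  - revert H; case_index; inversion 1.
  - inversion H; subst.
    + symmetry in H1; apply lift_rec_eq_lam in H1 as (A0 & B0 & -> & -> & ->).
      exists (subst M2 B0); split; [constructor | now rewrite lift_rec_subst].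
    + destruct (IHM1 _ _ _ H3) as (Y & ? & ->); exists (App Y M2); split; auto; now constructor.
    + destruct (IHM2 _ _ _ H3) as (Y & ? & ->); exists (App M1 Y); split; auto; now constructor.
  - inversion H; subst.
    + destruct (IHM1 _ _ _ H3) as (Y & ? & ->); exists (Lam Y M2); split; auto; now constructor.
    + destruct (IHM2 _ _ _ H3) as (Y & ? & ->); exists (Lam M1 Y); split; auto; now constructor.
  - inversion H; subst.
    + destruct (IHM1 _ _ _ H3) as (Y & ? & ->); exists (Pi Y M2); split; auto; now constructor.
    + destruct (IHM2 _ _ _ H3) as (Y & ? & ->); exists (Pi M1 Y); split; auto; now constructor.
Qed.

Lemma red1_subst_rec_l N M M' k :
  red1 M M' -> red1 (subst_rec N M k) (subst_rec N M' k).
Proof.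
  intros H; revert k; induction H; intros; simpl; try (constructor; auto).
  rewrite subst_rec_subst; constructor.
Qed.

Lemma red_refl M : red M M.
Proof. apply rt_refl. Qed.

Lemma red_trans M N P : red M N -> red N P -> red M P.
Proof. apply rt_trans. Qed.

Lemma red1_red M N : red1 M N -> red M N.
Proof. apply rt_step. Qed.

Lemma red_congr (f : term T -> term T) :
  (forall M M', red1 M M' -> red1 (f M) (f M')) ->
  forall M M', red M M' -> red (f M) (f M').
Proof.
  intros Hf M M' H; induction H; eauto using red1_red, red_refl, red_trans.
Qed.

Lemma red_app A A' B B' : red A A' -> red B B' -> red (App A B) (App A' B').
Proof.
  intros HA HB; apply red_trans with (App A' B).
  - apply (red_congr (fun x => App x B)); auto; now constructor.
  - apply (red_congr (App A')); auto; now constructor.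
Qed.

Lemma red_lam A A' B B' : red A A' -> red B B' -> red (Lam A B) (Lam A' B').
Proof.
  intros HA HB; apply red_trans with (Lam A' B).
  - apply (red_congr (fun x => Lam x B)); auto; now constructor.
  - apply (red_congr (Lam A')); auto; now constructor.
Qed.

Lemma red_pi A A' B B' : red A A' -> red B B' -> red (Pi A B) (Pi A' B').
Proof.
  intros HA HB; apply red_trans with (Pi A' B).
  - apply (red_congr (fun x => Pi x B)); auto; now constructor.
  - apply (red_congr (Pi A')); auto; now constructor.
Qed.

Lemma red_srt_inv s X : red (Srt s) X -> X = Srt s.
Proof.
  intros H; remember (Srt s) as Y; induction H; subst; auto.
  - inversion H.
  - rewrite IHclos_refl_trans2; auto.
Qed.

Lemma red_pi_inv A B X : red (Pi A B) X ->
  exists A' B', X = Pi A' B' /\ red A A' /\ red B B'.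
Proof.
  intros H; remember (Pi A B) as Y; revert A B HeqY.
  induction H; intros; subst.
  - inversion H; subst; eauto 10 using red1_red, red_refl.
  - eauto 10 using red_refl.
  - destruct (IHclos_refl_trans1 _ _ eq_refl) as (A1 & B1 & -> & ? & ?).
    destruct (IHclos_refl_trans2 _ _ eq_refl) as (A2 & B2 & -> & ? & ?).
    eauto 10 using red_trans.
Qed.

(** ** Confluence, via parallel reduction *)

Inductive par : term T -> term T -> Prop :=
  | par_srt s : par (Srt s) (Srt s)
  | par_var i : par (Var i) (Var i)
  | par_app M M' N N' : par M M' -> par N N' -> par (App M N) (App M' N')
  | par_lam M M' N N' : par M M' -> par N N' -> par (Lam M N) (Lam M' N')
  | par_pi M M' N N' : par M M' -> par N N' -> par (Pi M N) (Pi M' N')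
  | par_beta A M M' N N' :
      par M M' -> par N N' -> par (App (Lam A M) N) (subst N' M').

Lemma par_refl M : par M M.
Proof. induction M; constructor; auto. Qed.

Lemma red1_par M N : red1 M N -> par M N.
Proof. induction 1; constructor; auto using par_refl. Qed.

Lemma par_red M N : par M N -> red M N.
Proof.
  induction 1; auto using red_refl, red_app, red_lam, red_pi.
  apply red_trans with (App (Lam A M') N').
  - auto using red_app, red_lam, red_refl.
  - apply red1_red; constructor.
Qed.

Lemma par_lift_rec M M' n k : par M M' -> par (lift_rec n k M) (lift_rec n k M').
Proof.
  intros H; revert n k; induction H; intros; simpl; try (constructor; auto).
  - apply par_refl.
  - rewrite lift_rec_subst; constructor; auto.
Qed.

Lemma par_subst_rec N N' M M' k :
  par N N' -> par M M' -> par (subst_rec N M k) (subst_rec N' M' k).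
Proof.
  intros HN HM; revert k; induction HM; intros; simpl; try (constructor; auto).
  - destruct (Nat.compare i k); try constructor; now apply par_lift_rec.
  - rewrite subst_rec_subst; constructor; auto.
Qed.

Lemma par_lam_inv A B X : par (Lam A B) X ->
  exists A' B', X = Lam A' B' /\ par A A' /\ par B B'.
Proof. inversion 1; eauto. Qed.

Lemma par_diamond M M1 : par M M1 ->
  forall M2, par M M2 -> exists M3, par M1 M3 /\ par M2 M3.
Proof.
  induction 1 as [s | i | M M' N N' HM IHM HN IHN | M M' N N' HM IHM HN IHN
                 | M M' N N' HM IHM HN IHN | A M M' N N' HM IHM HN IHN];
    intros M2 H2; inversion H2; subst.
  - exists (Srt s); split; constructor.
  - exists (Var i); split; constructor.
  - destruct (IHM _ H1) as (X & ? & ?); destruct (IHN _ H4) as (Y & ? & ?).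
    exists (App X Y); split; constructor; auto.
  - destruct (par_lam_inv HM) as (A1 & B1 & -> & _ & _).
    destruct (IHM (Lam A M'0)) as (X & HX1 & HX2); [constructor; auto using par_refl|].
    destruct (par_lam_inv HX2) as (A3 & B3 & -> & _ & HB3).
    inversion HX1; subst.
    destruct (IHN _ H4) as (Y & ? & ?).
    exists (subst Y B3); split; [constructor | apply par_subst_rec]; auto.
  - destruct (IHM _ H1) as (X & ? & ?); destruct (IHN _ H4) as (Y & ? & ?).
    exists (Lam X Y); split; constructor; auto.
  - destruct (IHM _ H1) as (X & ? & ?); destruct (IHN _ H4) as (Y & ? & ?).
    exists (Pi X Y); split; constructor; auto.
  - destruct (par_lam_inv H1) as (A1 & B1 & -> & _ & HB1).
    destruct (IHM _ HB1) as (X & ? & ?); destruct (IHN _ H4) as (Y & ? & ?).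
    exists (subst Y X); split; [apply par_subst_rec | constructor]; auto.
  - destruct (IHM _ H4) as (X & ? & ?); destruct (IHN _ H5) as (Y & ? & ?).
    exists (subst Y X); split; apply par_subst_rec; auto.
Qed.

Lemma par_strip M M1 M2 : par M M1 -> clos_refl_trans _ par M M2 ->
  exists M3, clos_refl_trans _ par M1 M3 /\ par M2 M3.
Proof.
  intros H H2; revert M1 H; induction H2; intros M1 H1.
  - destruct (par_diamond H1 H) as (X & ? & ?); exists X; split; auto using rt_step.
  - exists M1; split; auto using rt_refl.
  - destruct (IHclos_refl_trans1 _ H1) as (X & HX1 & HX2).
    destruct (IHclos_refl_trans2 _ HX2) as (Y & ? & ?).
    exists Y; split; eauto using rt_trans.
Qed.

Lemma red_iff_par_star M N : red M N <-> clos_refl_trans _ par M N.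
Proof.
  split; induction 1; eauto using rt_step, rt_refl, rt_trans, red1_par,
                                   par_red, red_refl, red_trans.
Qed.

Lemma confluence M M1 M2 : red M M1 -> red M M2 ->
  exists M3, red M1 M3 /\ red M2 M3.
Proof.
  rewrite !red_iff_par_star; intros H1; revert M2; induction H1; intros M2 H2.
  - destruct (par_strip H H2) as (X & ? & ?).
    exists X; split; [now apply red_iff_par_star | now apply par_red].
  - exists M2; split; [now apply red_iff_par_star | apply red_refl].
  - destruct (IHclos_refl_trans1 _ H2) as (X & HX1 & HX2).
    apply red_iff_par_star in HX1.
    destruct (IHclos_refl_trans2 _ HX1) as (Y & ? & ?).
    exists Y; split; eauto using red_trans.
Qed.

Lemma red_conv M N : red M N -> conv M N.
Proof. induction 1; [apply rst_step | apply rst_refl | eapply rst_trans]; eauto. Qed.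

Lemma conv_refl M : conv M M.
Proof. apply rst_refl. Qed.

Lemma conv_sym M N : conv M N -> conv N M.
Proof. apply rst_sym. Qed.

Lemma conv_trans M N P : conv M N -> conv N P -> conv M P.
Proof. apply rst_trans. Qed.

Lemma church_rosser M N : conv M N -> exists P, red M P /\ red N P.
Proof.
  induction 1 as [x y H | x | x y _ [P []] | x y z _ [P []] _ [Q []]].
  - exists y; split; auto using red1_red, red_refl.
  - exists x; split; apply red_refl.
  - eauto.
  - destruct (confluence (M := y) (M1 := P) (M2 := Q)) as (R & ? & ?); auto.
    exists R; split; eauto using red_trans.
Qed.

Lemma conv_congr (f : term T -> term T) :
  (forall M M', red1 M M' -> red (f M) (f M')) ->
  forall M M', conv M M' -> conv (f M) (f M').
Proof.
  intros Hf; induction 1.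
  - now apply red_conv, Hf.
  - apply conv_refl.
  - now apply conv_sym.
  - eapply conv_trans; eauto.
Qed.

Lemma conv_lift_rec M M' n k : conv M M' -> conv (lift_rec n k M) (lift_rec n k M').
Proof. apply conv_congr; auto using red1_red, red1_lift_rec. Qed.

Lemma conv_subst_rec_l N M M' k :
  conv M M' -> conv (subst_rec N M k) (subst_rec N M' k).
Proof.
  apply (conv_congr (fun x => subst_rec N x k)); auto using red1_red, red1_subst_rec_l.
Qed.

Lemma red_subst_rec_r N N' M k : red N N' -> red (subst_rec N M k) (subst_rec N' M k).
Proof.
  induction 1; eauto using red_refl, red_trans, par_red, par_subst_rec, red1_par, par_refl.
Qed.

Lemma conv_app_l M M' N : conv M M' -> conv (App M N) (App M' N).
Proof.
  apply (conv_congr (fun x => App x N)); intros; apply red1_red; now constructor.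
Qed.

Lemma conv_pi_r A B B' : conv B B' -> conv (Pi A B) (Pi A B').
Proof. apply conv_congr; intros; apply red1_red; now constructor. Qed.

Lemma conv_srt_inj (s s' : T) : conv (Srt s) (Srt s') -> s = s'.
Proof.
  intros H; destruct (church_rosser H) as (P & H1 & H2).
  apply red_srt_inv in H1; apply red_srt_inv in H2; subst; now inversion H2.
Qed.

Lemma conv_pi_inj A B A' B' : conv (Pi A B) (Pi A' B') -> conv A A' /\ conv B B'.
Proof.
  intros H; destruct (church_rosser H) as (P & H1 & H2).
  apply red_pi_inv in H1 as (A1 & B1 & -> & ? & ?).
  apply red_pi_inv in H2 as (A2 & B2 & E & ? & ?); inversion E; subst.
  split; eapply conv_trans; eauto using red_conv, conv_sym.
Qed.

End Reduction.

(** * Metatheory of Pure Type Systems *)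

Section PTS.
Context {T : Type} {ax : T -> T -> Prop} {rl : T -> T -> T -> Prop}.
Notation ty := (typ ax rl).
Implicit Types M N A B C X : term T.
Implicit Types G : list (term T).

Inductive ctx_insert : nat -> list (term T) -> list (term T) -> Prop :=
  | ctx_insert_here G C s : ty G C (Srt s) -> ctx_insert 0 G (C :: G)
  | ctx_insert_under n G G' A :
      ctx_insert n G G' -> ctx_insert (S n) (A :: G) (lift_rec 1 n A :: G').

Lemma thinning G M A : ty G M A ->
  forall n G', ctx_insert n G G' -> ty G' (lift_rec 1 n M) (lift_rec 1 n A).
Proof.
  assert (Hhere : forall G M A G', ty G M A -> ctx_insert 0 G G' ->
                  ty G' (lift_rec 1 0 M) (lift_rec 1 0 A))
    by (inversion 2; subst; eapply t_weak; eauto).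
  induction 1; intros n G' Hins.
  - inversion Hins; subst; eapply Hhere; [constructor; eauto | exact Hins].
  - destruct n; [eapply Hhere; [econstructor; eauto | exact Hins] |].
    inversion Hins; subst; rewrite lift_rec_lift1; apply t_start with s; auto.
  - destruct n; [eapply Hhere; [econstructor; eauto | exact Hins] |].
    inversion Hins; subst; rewrite !lift_rec_lift1; eapply t_weak; eauto.
  - simpl; eapply t_prod; eauto; apply IHtyp2; now constructor.
  - rewrite lift_rec_subst; econstructor; eauto.
  - simpl; econstructor; eauto; apply IHtyp1; now constructor.
  - eapply t_conv; eauto using conv_lift_rec.
Qed.

Lemma thinning1 G A C s M B : ty G C (Srt s) -> ty (A :: G) M B ->
  ty (lift 1 A :: C :: G) (lift_rec 1 1 M) (lift_rec 1 1 B).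
Proof. intros HC HM; exact (thinning HM (ctx_insert_under A (ctx_insert_here HC))). Qed.

Inductive ctx_subst (N : term T) : nat -> list (term T) -> list (term T) -> Prop :=
  | ctx_subst_here G B : ty G N B -> ctx_subst N 0 (B :: G) G
  | ctx_subst_under n G G' A :
      ctx_subst N n G G' -> ctx_subst N (S n) (A :: G) (subst_rec N A n :: G').

Lemma substitution G M A : ty G M A ->
  forall N n G', ctx_subst N n G G' -> ty G' (subst_rec N M n) (subst_rec N A n).
Proof.
  induction 1; intros N0 n G' Hs.
  - inversion Hs.
  - destruct n; inversion Hs; subst.
    + rewrite simpl_subst_lift1; simpl; unfold lift; now rewrite lift_rec0.
    + rewrite subst_rec_lift1; apply t_start with s; auto.
  - destruct n; inversion Hs; subst.
    + now rewrite !simpl_subst_lift1.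
    + rewrite !subst_rec_lift1; eapply t_weak; eauto.
  - simpl; eapply t_prod; eauto; apply IHtyp2; now constructor.
  - rewrite subst_rec_subst; econstructor; eauto.
  - simpl; econstructor; eauto; apply IHtyp1; now constructor.
  - eapply t_conv; eauto using conv_subst_rec_l.
Qed.

Lemma substitution1 G B M A N : ty (B :: G) M A -> ty G N B ->
  ty G (subst N M) (subst N A).
Proof. intros HM HN; apply (substitution HM); now constructor. Qed.

Lemma gen_srt G s X : ty G (Srt s) X -> exists s', ax s s' /\ conv (Srt s') X.
Proof.
  intros H; remember (Srt s) as Y; revert s HeqY.
  induction H; intros; try discriminate.
  - inversion HeqY; subst; eauto using conv_refl.
  - apply lift_rec_eq_srt in HeqY; subst.
    destruct (IHtyp1 _ eq_refl) as (s' & ? & Hc).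
    exists s'; split; auto; exact (conv_lift_rec 1 0 Hc).
  - destruct (IHtyp1 _ HeqY) as (s' & ? & ?); eauto using conv_trans.
Qed.

Lemma gen_var G i X : ty G (Var i) X ->
  exists A, nth_error G i = Some A /\ conv (lift (S i) A) X.
Proof.
  intros H; remember (Var i) as Y; revert i HeqY.
  induction H; intros; try discriminate.
  - inversion HeqY; subst; exists A; split; [reflexivity | apply conv_refl].
  - apply lift1_eq_var in HeqY as (j & -> & ->).
    destruct (IHtyp1 _ eq_refl) as (A & ? & ?).
    exists A; split; auto; rewrite <- lift1_lift; now apply conv_lift_rec.
  - destruct (IHtyp1 _ HeqY) as (A0 & ? & ?); eauto using conv_trans.
Qed.

Lemma gen_pi G A B X : ty G (Pi A B) X -> exists s1 s2 s3,
  ty G A (Srt s1) /\ ty (A :: G) B (Srt s2) /\ rl s1 s2 s3 /\ conv (Srt s3) X.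
Proof.
  intros H; remember (Pi A B) as Y; revert A B HeqY.
  induction H; intros; try discriminate.
  - apply lift_rec_eq_pi in HeqY as (A1 & B1 & -> & -> & ->).
    destruct (IHtyp1 _ _ eq_refl) as (s1 & s2 & s3 & HA & HB & Hr & Hc).
    exists s1, s2, s3; repeat split; auto.
    + apply (thinning HA); econstructor; eauto.
    + exact (thinning1 H0 HB).
    + exact (conv_lift_rec 1 0 Hc).
  - inversion HeqY; subst; exists s1, s2, s3; eauto using conv_refl.
  - destruct (IHtyp1 _ _ HeqY) as (s1 & s2 & s3 & ? & ? & ? & ?).
    exists s1, s2, s3; eauto 10 using conv_trans.
Qed.

Lemma gen_lam G A M X : ty G (Lam A M) X -> exists B s,
  ty (A :: G) M B /\ ty G (Pi A B) (Srt s) /\ conv (Pi A B) X.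
Proof.
  intros H; remember (Lam A M) as Y; revert A M HeqY.
  induction H; intros; try discriminate.
  - apply lift_rec_eq_lam in HeqY as (A0 & B0 & -> & -> & ->).
    destruct (IHtyp1 _ _ eq_refl) as (B1 & s1 & HM & HP & Hc).
    exists (lift_rec 1 1 B1), s1; repeat split.
    + exact (thinning1 H0 HM).
    + apply (thinning HP); econstructor; eauto.
    + exact (conv_lift_rec 1 0 Hc).
  - inversion HeqY; subst; exists B, s; eauto using conv_refl.
  - destruct (IHtyp1 _ _ HeqY) as (B1 & s1 & ? & ? & ?).
    exists B1, s1; eauto 10 using conv_trans.
Qed.

Lemma gen_app G M N X : ty G (App M N) X -> exists A B,
  ty G M (Pi A B) /\ ty G N A /\ conv (subst N B) X.
Proof.
  intros H; remember (App M N) as Y; revert M N HeqY.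
  induction H; intros; try discriminate.
  - apply lift_rec_eq_app in HeqY as (M1 & N1 & -> & -> & ->).
    destruct (IHtyp1 _ _ eq_refl) as (A1 & B1 & HM & HN & Hc).
    exists (lift 1 A1), (lift_rec 1 1 B1); repeat split.
    + apply (thinning HM); econstructor; eauto.
    + apply (thinning HN); econstructor; eauto.
    + apply (conv_lift_rec 1 0) in Hc; now rewrite lift_rec_subst in Hc.
  - inversion HeqY; subst; exists A, B; eauto using conv_refl.
  - destruct (IHtyp1 _ _ HeqY) as (A1 & B1 & ? & ? & ?).
    exists A1, B1; eauto 10 using conv_trans.
Qed.

Lemma type_correctness G M A : ty G M A ->
  (exists s, A = Srt s) \/ (exists s, ty G A (Srt s)).
Proof.
  induction 1.
  - left; eauto.
  - right; exists s; exact (t_weak H H).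
  - destruct IHtyp1 as [(s1 & ->) | (s1 & HB)].
    + left; now exists s1.
    + right; exists s1; exact (t_weak HB H0).
  - left; eauto.
  - destruct IHtyp1 as [(s1 & E) | (s1 & HPi)]; [discriminate|].
    apply gen_pi in HPi as (s2 & s3 & s4 & _ & HB & _).
    right; exists s3; exact (substitution1 HB H0).
  - right; eauto.
  - right; eauto.
Qed.

Lemma typ_subst_codomain G M A B N : ty G M (Pi A B) -> ty G N A ->
  exists s, ty G (subst N B) (Srt s).
Proof.
  intros HM HN; destruct (type_correctness HM) as [(s & E) | (s & HPi)]; [discriminate|].
  apply gen_pi in HPi as (s2 & s3 & s4 & _ & HB & _).
  exists s3; exact (substitution1 HB HN).
Qed.

Lemma typ_beta G A0 M0 A B N : ty G (Lam A0 M0) (Pi A B) -> ty G N A ->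
  ty G (subst N M0) (subst N B).
Proof.
  intros HL HN; destruct (typ_subst_codomain HL HN) as (s' & Hs').
  destruct (gen_lam HL) as (B0 & s & HM & HP & HC).
  apply conv_pi_inj in HC as [HA HB].
  destruct (gen_pi HP) as (s1 & _ & _ & HA0 & _).
  apply t_conv with (subst N B0) s'; [| exact Hs' | now apply conv_subst_rec_l].
  apply (substitution1 HM); apply t_conv with A s1; auto using conv_sym.
Qed.

Lemma typ_app_red1 G M N A B X :
  ty G M (Pi A B) -> ty G N A ->
  (forall M', red1 M M' -> ty G M' (Pi A B)) -> (forall N', red1 N N' -> ty G N' A) ->
  red1 (App M N) X -> ty G X (subst N B).
Proof.
  intros HM HN IHM IHN HX; destruct (typ_subst_codomain HM HN) as (s & Hs).
  inversion HX as [A0 M0 N0 | M0 M' N0 HM' | M0 N0 N' HN' | | | |]; subst.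
  - exact (typ_beta HM HN).
  - eapply t_app; eauto.
  - apply t_conv with (subst N' B) s.
    + eapply t_app; eauto.
    + exact Hs.
    + apply conv_sym, red_conv, red_subst_rec_r, red1_red; auto.
Qed.

Inductive red1_ctx : list (term T) -> list (term T) -> Prop :=
  | red1_ctx_hd A A' G : red1 A A' -> red1_ctx (A :: G) (A' :: G)
  | red1_ctx_tl A G G' : red1_ctx G G' -> red1_ctx (A :: G) (A :: G').

Lemma subject_reduction1 G M A : ty G M A ->
  (forall M', red1 M M' -> ty G M' A) /\ (forall G', red1_ctx G G' -> ty G' M A).
Proof.
  induction 1 as [s1 s2 Hax | G A s HA [IHr IHc] | G M B C s HM [IHMr IHMc] HC [IHCr IHCc]
                 | G A B s1 s2 s3 HA [IHAr IHAc] HB [IHBr IHBc] Hrl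
                 | G M N A B HM [IHMr IHMc] HN [IHNr IHNc]
                 | G A M B s HM [IHMr IHMc] HP [IHPr IHPc]
                 | G M A B s HM [IHMr IHMc] HB [IHBr IHBc] Hc];
    split; intros X HX.
  - inversion HX.
  - inversion HX.
  - inversion HX.
  - inversion HX as [A1 A' G1 Hred | A1 G1 G'' Hctx]; subst.
    + assert (HA' : ty G A' (Srt s)) by now apply IHr.
      apply t_conv with (lift 1 A') s.
      * now apply t_start with s.
      * exact (t_weak HA HA').
      * apply conv_sym, red_conv, red1_red, red1_lift_rec; auto.
    + apply t_start with s; auto.
  - apply red1_lift_rec_inv in HX as (M1 & ? & ->); eapply t_weak; eauto.
  - inversion HX; subst; eapply t_weak; eauto.
  - inversion HX; subst; eapply t_prod; eauto; apply IHBc; now constructor.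
  - eapply t_prod; eauto; apply IHBc; now constructor.
  - exact (typ_app_red1 HM HN IHMr IHNr HX).
  - eapply t_app; eauto.
  - inversion HX; subst.
    + apply t_conv with (Pi A' B) s.
      * eapply t_abs; [apply IHMc; now constructor |].
        apply IHPr; now constructor.
      * exact HP.
      * apply conv_sym, red_conv, red1_red; now constructor.
    + eapply t_abs; eauto.
  - eapply t_abs; eauto; apply IHMc; now constructor.
  - eapply t_conv; eauto.
  - eapply t_conv; eauto.
Qed.

Lemma subject_reduction G M M' A : red M M' -> ty G M A -> ty G M' A.
Proof.
  induction 1; auto; intros HM; now apply (proj1 (subject_reduction1 HM)).
Qed.

Hypothesis ax_functional : forall s s1 s2, ax s s1 -> ax s s2 -> s1 = s2.
Hypothesis rl_functional :
  forall s1 s2 s3 s3', rl s1 s2 s3 -> rl s1 s2 s3' -> s3 = s3'.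

Lemma typ_uniqueness M G A1 A2 : ty G M A1 -> ty G M A2 -> conv A1 A2.
Proof.
  revert G A1 A2; induction M as [s | i | M IHM N IHN | A IHA M IHM | A IHA B IHB];
    intros G A1 A2 H1 H2.
  - apply gen_srt in H1 as (a & Ha & Hc1); apply gen_srt in H2 as (b & Hb & Hc2).
    rewrite (ax_functional Ha Hb) in Hc1; eauto using conv_trans, conv_sym.
  - apply gen_var in H1 as (a & Ha & Hc1); apply gen_var in H2 as (b & Hb & Hc2).
    rewrite Ha in Hb; inversion Hb; subst; eauto using conv_trans, conv_sym.
  - apply gen_app in H1 as (C1 & B1 & HM1 & _ & Hc1).
    apply gen_app in H2 as (C2 & B2 & HM2 & _ & Hc2).
    destruct (conv_pi_inj (IHM _ _ _ HM1 HM2)) as [_ HB].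
    eapply conv_trans; [apply conv_sym; exact Hc1|].
    eapply conv_trans; [|exact Hc2]; now apply conv_subst_rec_l.
  - apply gen_lam in H1 as (B1 & s1 & HM1 & _ & Hc1).
    apply gen_lam in H2 as (B2 & s2 & HM2 & _ & Hc2).
    eapply conv_trans; [apply conv_sym; exact Hc1|].
    eapply conv_trans; [|exact Hc2]; apply conv_pi_r; eauto.
  - apply gen_pi in H1 as (a1 & a2 & a3 & HA1 & HB1 & Hr1 & Hc1).
    apply gen_pi in H2 as (b1 & b2 & b3 & HA2 & HB2 & Hr2 & Hc2).
    pose proof (conv_srt_inj (IHA _ _ _ HA1 HA2)).
    pose proof (conv_srt_inj (IHB _ _ _ HB1 HB2)); subst.
    rewrite (rl_functional Hr1 Hr2) in Hc1; eauto using conv_trans, conv_sym.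
Qed.

End PTS.

(** * The minimal completion *)

Section Completion.
Variable Sp : spec.
Hypothesis HS : functional Sp.

Lemma axStar_functional x a b : axStar Sp x a -> axStar Sp x b -> a = b.
Proof.
  destruct HS as [Hax _].
  intros [H1 | (E1 & c1 & Ex1 & Ht1)] [H2 | (E2 & c2 & Ex2 & Ht2)]; subst; auto.
  - destruct x, a, b; simpl in *; try contradiction; f_equal; eauto.
  - destruct a; simpl in H1; try contradiction; exfalso; apply Ht2; eauto.
  - destruct b; simpl in H2; try contradiction; exfalso; apply Ht1; eauto.
Qed.

Lemma rlStar_functional x y a b : rlStar Sp x y a -> rlStar Sp x y b -> a = b.
Proof.
  destruct HS as [_ Hrl].
  intros [H1 | (E1 & N1)] [H2 | (E2 & N2)]; subst; auto.
  - destruct x, y, a, b; simpl in *; try contradiction; f_equal; eauto.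
  - destruct a; [exfalso; apply N2; eauto | destruct x, y; contradiction].
  - destruct b; [exfalso; apply N1; eauto | destruct x, y; contradiction].
Qed.

Lemma typStar_uniqueness G M A1 A2 :
  typStar Sp G M A1 -> typStar Sp G M A2 -> conv A1 A2.
Proof. apply typ_uniqueness; [exact axStar_functional | exact rlStar_functional]. Qed.

Lemma typStar_tau_untypable G X A : typStar Sp G X A -> X <> Srt tau.
Proof.
  induction 1; intros E; try discriminate.
  - inversion E; subst; destruct H as [H | (_ & a & Ea & _)]; [exact H | discriminate].
  - exact (IHtyp1 (lift_rec_eq_srt _ _ _ _ E)).
  - exact (IHtyp1 E).
Qed.

Lemma typStar_var_not_tau G i : ~ typStar Sp G (Var i) (Srt tau).
Proof.
  intros H; remember (Var i) as X; remember (Srt tau) as Y; revert i HeqX HeqY.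
  induction H; intros; try discriminate.
  - apply lift_rec_eq_srt in HeqY; now apply (typStar_tau_untypable H) in HeqY.
  - apply lift_rec_eq_srt in HeqY; apply lift1_eq_var in HeqX as (j & -> & ->).
    eapply IHtyp1; eauto.
  - subst; now apply (typStar_tau_untypable H0).
Qed.

(** [A] has fewer than [n] leading products with codomains of type tau,
    i.e. the reducibility predicate at type [A] recurses less than [n]
    times through its second clause. *)
Fixpoint tau_depth_lt (n : nat) (G : list (cterm Sp)) (A : cterm Sp) : Prop :=
  match n with
  | 0 => False
  | S m => forall B C, A = Pi B C -> typStar Sp (B :: G) C (Srt tau) ->
           tau_depth_lt m (B :: G) C
  end.

Lemma tau_depth_exists A G : exists n, tau_depth_lt n G A.
Proof.
  revert G; induction A; intros G; try (exists 1; simpl; discriminate).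
  destruct (IHA2 (A1 :: G)) as (n & Hn).
  exists (S n); simpl; intros B C E _; now inversion E; subst.
Qed.

Lemma tau_depth_subst n X N k G G' :
  ctx_subst (ax := axStar Sp) (rl := rlStar Sp) N k G G' -> typStar Sp G X (Srt tau) ->
  tau_depth_lt n G X -> tau_depth_lt n G' (subst_rec N X k).
Proof.
  revert X k G G'; induction n as [|n IH]; intros X k G G' Hsub HX Hdepth; [contradiction|].
  intros B' C' E HC'; destruct X as [s | i | X1 X2 | X1 X2 | X1 X2]; simpl in E;
    try discriminate.
  - exfalso; revert E; destruct (Nat.compare_spec i k) as [-> | |]; try discriminate.
    now apply typStar_var_not_tau in HX.
  - inversion E; subst.
    destruct (gen_pi HX) as (s1 & s2 & s3 & _ & HC & _).
    pose proof (substitution HC (ctx_subst_under X1 Hsub)) as HC2.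
    rewrite (conv_srt_inj (typStar_uniqueness HC2 HC')) in HC.
    apply IH with (X1 :: G); auto using ctx_subst_under.
Qed.

Lemma tau_depth_subst_codomain n G B C N :
  typStar Sp G (Pi B C) (Srt tau) -> tau_depth_lt (S n) G (Pi B C) ->
  typStar Sp G N B -> typStar Sp G (subst N C) (Srt tau) ->
  tau_depth_lt n G (subst N C).
Proof.
  intros HPi Hdepth HN HCN.
  destruct (gen_pi HPi) as (s1 & s2 & s3 & _ & HC & _).
  assert (Hs2 : s2 = tau)
    by exact (conv_srt_inj (typStar_uniqueness (substitution1 HC HN) HCN)).
  subst s2; apply (tau_depth_subst n (ctx_subst_here HN)); auto.
Qed.

Lemma typS_reduct_conv G M M' A :
  (exists M0 A0, red M M0 /\ red A A0 /\ typS Sp G M0 A0) -> conv M M' ->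
  exists M1 A1, red M' M1 /\ red A A1 /\ typS Sp G M1 A1.
Proof.
  intros (M0 & A0 & HM0 & HA0 & HT) Hc.
  assert (Hc0 : conv M0 M') by eauto using conv_trans, conv_sym, red_conv.
  destruct (church_rosser Hc0) as (M1 & HM1 & HM'1).
  exists M1, A0; repeat split; auto; exact (subject_reduction HM1 HT).
Qed.

Variable P : list (cterm Sp) -> cterm Sp -> cterm Sp -> Prop.
Hypothesis HP : is_reducibility Sp P.

Lemma reducibility_conv_closed n G M M' A :
  (typStar Sp G A (Srt tau) -> tau_depth_lt n G A) ->
  P G M A -> typStar Sp G M' A -> conv M M' -> P G M' A.
Proof.
  revert G M M' A; induction n as [|n IH]; intros G M M' A Hdepth HPM HM' Hc;
    apply HP in HPM as (HG & HM & s & HAs & Hred & Happ); apply HP;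
    repeat split; auto; exists s; (split; [exact HAs|]);
    (split; [intros Hs; exact (typS_reduct_conv (Hred Hs) Hc)|]);
    intros -> B C -> N HN.
  - contradiction (Hdepth HAs).
  - destruct (proj1 (HP G N B) HN) as (_ & HN' & _).
    apply IH with (App M N).
    + intros HCN; exact (tau_depth_subst_codomain HAs (Hdepth HAs) HN' HCN).
    + exact (Happ eq_refl B C eq_refl N HN).
    + eapply t_app; eauto.
    + now apply conv_app_l.
Qed.

End Completion.

Theorem lemma5p19 (S : spec) (HS : functional S)
  (P : list (cterm S) -> cterm S -> cterm S -> Prop)
  (HP : is_reducibility S P)
  (G : list (cterm S)) (M M' A : cterm S) :
  P G M A -> typStar S G M' A -> conv M M' -> P G M' A.
Proof.
  destruct (tau_depth_exists A G) as (n & Hn).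
  exact (reducibility_conv_closed HS HP n (fun _ => Hn)).
Qed.
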